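(* For every positive integer $n$, $$\Phi(n)=\begin{cases} 2n\prod_{p\mid n}\left(1-\frac{\beta(p)}{p}\right), & \text{if } 4\mid n;\\ n\prod_{p\mid n}\left(1-\frac{\beta(p)}{p}\right), & \text{otherwise},\end{cases}$$ where the products run over the primes $p$ dividing $n$.
   Context: For a positive integer $n$, let $\mathcal{G}_n=\{a+bi\in\mathbb{Z}[i]/n\mathbb{Z}[i] : a^2+b^2\equiv 1 \pmod n\}$ and $\Phi(n)=|\mathcal{G}_n|$. For an odd prime $p$, $\beta(p)=\left(\frac{-1}{p}\right)$ is the Legendre symbol, and $\beta(2)=0$. *)

From HB Require Import structures.
From mathcomp Require Import all_boot all_order all_algebra.
Set Implicit Arguments. Unset Strict Implicit. Unset Printing Implicit Defensive.
Import Order.TTheory GRing.Theory Num.Theory.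

(* G_n = { a + b i in Z[i]/nZ[i] : a^2 + b^2 = 1 mod n }.
   Z[i]/nZ[i] is identified with pairs (a,b) of residues mod n,
   represented by 'I_n * 'I_n (a + b i <-> (a, b)). *)
Definition Gn (n : nat) : {set 'I_n * 'I_n} :=
  [set ab : 'I_n * 'I_n | ((ab.1 : nat) ^ 2 + (ab.2 : nat) ^ 2 == 1 %[mod n])%N].

Definition Phi (n : nat) : nat := #|Gn n|.

Local Open Scope ring_scope.
Definition legendre (a : int) (p : nat) : int :=
  if (p%:Z %| a)%Z then 0
  else if [exists x : 'I_p, (p%:Z %| ((x : nat)%:Z ^+ 2 - a))%Z] then 1 else -1.

Definition beta (p : nat) : int := if p == 2%N then 0 else legendre (-1) p.

From HB Require Import structures.
From mathcomp Require Import all_boot all_order all_algebra.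
From mathcomp Require Import zify ring lra.
Import Order.TTheory GRing.Theory Num.Theory.

(* The
   proof follows the multiplicative structure of n:
   - Phi is multiplicative on coprime arguments (Chinese remainder theorem);
   - for an odd prime p, stereographic projection from (-1, 0) shows that
     the circle over the field Z/p has p + 1 - #{t | t^2 = -1} = p - beta(p)
     points;
   - Hensel lifting: a point modulo M whose coordinates are not both
     divisible by p has exactly p lifts among the p^2 candidate points modulo
     M p; this gives Phi(p^(k+1)) = p^k Phi(p) for odd p, and
     Phi(2^(k+2)) = 2^(k+3) (a doubling at each step from Phi(4) = 8);
   - the right-hand side [Phi_formula] of the theorem is multiplicative too,
     so the theorem follows by induction over coprime factorisations. *)

Definition on_circle (M a b : nat) : bool := a ^ 2 + b ^ 2 == 1 %[mod M].

Definition circle_count (m M : nat) : nat :=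
  \sum_(a < m) \sum_(b < m) on_circle M a b.

Lemma sum_nat_bool_card (T : finType) (P : pred T) :
  \sum_(i : T) (P i : nat) = #|[set i | P i]|.
Proof.
rewrite -sum1_card [RHS]big_mkcond /=; apply: eq_bigr => i _.
by rewrite inE; case: (P i).
Qed.

Lemma Phi_circle_count n : Phi n = circle_count n n.
Proof.
rewrite /Phi /Gn /circle_count pair_big /= sum_nat_bool_card.
by apply: eq_card => -[a b]; rewrite !inE.
Qed.

Lemma on_circle_sqr_congr M a b a' b' :
  a ^ 2 = a' ^ 2 %[mod M] -> b ^ 2 = b' ^ 2 %[mod M] ->
  on_circle M a b = on_circle M a' b'.
Proof. by move=> ea eb; rewrite /on_circle -modnDm ea eb modnDm. Qed.

Lemma on_circle_mod M a b : on_circle M (a %% M) (b %% M) = on_circle M a b.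
Proof. apply: on_circle_sqr_congr; exact: modnXm. Qed.

Lemma on_circle_dvd {M N a b : nat} : M %| N -> on_circle N a b -> on_circle M a b.
Proof.
by move=> dMN /eqP e; apply/eqP; have := congr1 (modn^~ M) e; rewrite /= !modn_dvdm.
Qed.

Lemma on_circle_crt m n a b : coprime m n ->
  on_circle (m * n) a b = on_circle m a b && on_circle n a b.
Proof. by move=> co; rewrite /on_circle chinese_remainder. Qed.

Lemma sqr_shift_mod M m a i : M %| 2 * m -> M %| m ^ 2 ->
  (a + m * i) ^ 2 = a ^ 2 %[mod M].
Proof.
move=> /dvdnP[j hj] /dvdnP[k hk].
have -> : (a + m * i) ^ 2 = a ^ 2 + (j * a * i + k * i ^ 2) * M.
  rewrite sqrnD expnMn hk.
  have -> : 2 * (a * (m * i)) = (2 * m) * (a * i) by ring.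
  by rewrite hj; ring.
by rewrite addnC modnMDl.
Qed.

Lemma sum_mul_split (F : nat -> nat) m t :
  \sum_(x < m * t) F x = \sum_(i < t) \sum_(a < m) F (a + m * i).
Proof.
elim: t => [|t IH]; first by rewrite muln0 !big_ord0.
rewrite big_ord_recr /= -IH mulnSr big_split_ord /=; congr (_ + _).
by apply: eq_bigr => i _; rewrite addnC.
Qed.

Lemma sum2_mul_split (F : nat -> nat -> nat) m t :
  \sum_(x < m * t) \sum_(y < m * t) F x y =
  \sum_(a < m) \sum_(b < m) \sum_(i < t) \sum_(j < t) F (a + m * i) (b + m * j).
Proof.
rewrite (sum_mul_split (fun x => \sum_(y < m * t) F x y)) exchange_big /=.
apply: eq_bigr => a _.
under eq_bigr => i _ do rewrite (sum_mul_split (F (a + m * i))) exchange_big /=.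
by rewrite exchange_big.
Qed.

(* If M divides 2m and m^2, the count over [0, m t)^2 is t^2 times the
   count over [0, m)^2: the circle is periodic of period m in each variable. *)
Lemma circle_count_periodic m M t : M %| 2 * m -> M %| m ^ 2 ->
  circle_count (m * t) M = t ^ 2 * circle_count m M.
Proof.
move=> d2m dm2; rewrite /circle_count (sum2_mul_split (on_circle M)) big_distrr /=.
apply: eq_bigr => a _; rewrite big_distrr /=; apply: eq_bigr => b _.
under eq_bigr => i _ do under eq_bigr => j _ do
  rewrite (@on_circle_sqr_congr _ _ _ a b) ?sqr_shift_mod //.
by rewrite !sum_nat_const !card_ord mulnA mulnn.
Qed.

Lemma count_linear_cong p c u : prime p -> ~~ (p %| u) ->
  \sum_(i < p) ((p %| c + u * i) : nat) = 1.
Proof.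
move=> p_pr pNu; have p_gt0 := prime_gt0 p_pr.
pose f (i : 'I_p) : 'I_p := Ordinal (ltn_pmod (c + u * i) p_gt0).
have f_inj : injective f.
  move=> i j /(congr1 val) /= /eqP eij; apply: val_inj => /=.
  wlog le_ij : i j eij / i <= j.
    move=> sym_case; have [ij|/ltnW ji] := leqP i j; first exact: sym_case.
    by symmetry; apply: sym_case; rewrite // eq_sym.
  move: eij; rewrite eq_sym eqn_modDl eqn_mod_dvd ?leq_mul2l ?le_ij ?orbT //.
  rewrite -mulnBr Euclid_dvdM // (negbTE pNu) /=.
  have lt_ji : j - i < p by have := ltn_ord j; lia.
  by case: (posnP (j - i)) => [|ji_gt0 /(dvdn_leq ji_gt0)]; lia.
rewrite sum_nat_bool_card.
have -> : [set i : 'I_p | p %| c + u * i] = f @^-1: [set Ordinal p_gt0].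
  by apply/setP => i; rewrite !inE -val_eqE.
by rewrite card_preimset // cards1.
Qed.

Lemma count_linear_cong2 p c u v : prime p -> ~~ (p %| u) || ~~ (p %| v) ->
  \sum_(i < p) \sum_(j < p) ((p %| c + u * i + v * j) : nat) = p.
Proof.
move=> p_pr /orP[pNu|pNv].
  rewrite exchange_big /=.
  under eq_bigr => j _ do under eq_bigr => i _ do rewrite addnAC.
  under eq_bigr => j _ do rewrite count_linear_cong //.
  by rewrite sum_nat_const card_ord muln1.
under eq_bigr => i _ do rewrite count_linear_cong //.
by rewrite sum_nat_const card_ord muln1.
Qed.

(* Hensel lifting from modulus M to M p along a step m with 2 m = e M and
   M p | m^2: every point (a, b) of the circle mod M whose gradient (e a, e b)
   is nonzero mod p has exactly p lifts (a + m i, b + m j), i, j < p, to the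
   circle mod M p, and points off the circle mod M have none. *)
Section HenselLift.

Variables (p m M e d : nat).
Hypotheses (p_pr : prime p) (M_gt1 : 1 < M).
Hypotheses (two_m : 2 * m = e * M) (m_sqr : m ^ 2 = d * (M * p)).

Let M_dvd_2m : M %| 2 * m. Proof. by rewrite two_m dvdn_mull. Qed.
Let M_dvd_msqr : M %| m ^ 2. Proof. by rewrite m_sqr dvdn_mull // dvdn_mulr. Qed.

Lemma on_circle_lift_linear a b i j c : a ^ 2 + b ^ 2 = 1 + c * M ->
  on_circle (M * p) (a + m * i) (b + m * j) = (p %| c + e * a * i + e * b * j).
Proof.
move=> abc; rewrite /on_circle.
have -> : (a + m * i) ^ 2 + (b + m * j) ^ 2 =
    (a ^ 2 + b ^ 2) + m ^ 2 * (i ^ 2 + j ^ 2) + (2 * m) * (a * i + b * j) by ring.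
rewrite abc m_sqr two_m.
have -> : 1 + c * M + d * (M * p) * (i ^ 2 + j ^ 2) + e * M * (a * i + b * j)
    = (d * (i ^ 2 + j ^ 2)) * (M * p) + (M * (c + e * a * i + e * b * j) + 1) by ring.
rewrite modnMDl eqn_mod_dvd ?leq_addl // addnK dvdn_pmul2l //; lia.
Qed.

Lemma lift_fiber_on a b : on_circle M a b -> ~~ (p %| e * a) || ~~ (p %| e * b) ->
  \sum_(i < p) \sum_(j < p) on_circle (M * p) (a + m * i) (b + m * j) = p.
Proof.
move=> /eqP ab_circ grad.
have abc : a ^ 2 + b ^ 2 = 1 + (a ^ 2 + b ^ 2) %/ M * M.
  by rewrite {1}(divn_eq (a ^ 2 + b ^ 2) M) ab_circ (modn_small M_gt1) addnC.
under eq_bigr => i _ do under eq_bigr => j _ do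
  rewrite (on_circle_lift_linear _ _ _ _ _ abc).
exact: count_linear_cong2.
Qed.

Lemma lift_fiber_off a b : ~~ on_circle M a b ->
  \sum_(i < p) \sum_(j < p) on_circle (M * p) (a + m * i) (b + m * j) = 0.
Proof.
move=> ab_off; apply: big1 => i _; apply: big1 => j _; apply/eqP; rewrite eqb0.
apply: contra ab_off => /(on_circle_dvd (dvdn_mulr p (dvdnn M))).
by rewrite (@on_circle_sqr_congr _ _ _ a b) ?sqr_shift_mod.
Qed.

Lemma circle_count_lift :
  (forall a b, on_circle M a b -> ~~ (p %| e * a) || ~~ (p %| e * b)) ->
  circle_count (m * p) (M * p) = p * circle_count m M.
Proof.
move=> grad; rewrite /circle_count (sum2_mul_split (on_circle (M * p))).
rewrite big_distrr /=; apply: eq_bigr => a _; rewrite big_distrr /=.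
apply: eq_bigr => b _; have [ab_on|ab_off] := boolP (on_circle M a b).
  by rewrite lift_fiber_on ?grad ?muln1.
by rewrite lift_fiber_off ?muln0.
Qed.

End HenselLift.

Section ChineseRemainder.

Variables (m n : nat).
Hypotheses (m_gt0 : 0 < m) (n_gt0 : 0 < n) (co_mn : coprime m n).

Let mod_m (x : nat) : 'I_m := Ordinal (ltn_pmod x m_gt0).
Let mod_n (x : nat) : 'I_n := Ordinal (ltn_pmod x n_gt0).

Let crt_pair (ab : 'I_(m * n) * 'I_(m * n)) : ('I_m * 'I_m) * ('I_n * 'I_n) :=
  ((mod_m ab.1, mod_m ab.2), (mod_n ab.1, mod_n ab.2)).

Let crt_inj {x y : 'I_(m * n)} : x %% m = y %% m -> x %% n = y %% n -> x = y.
Proof.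
move=> em en; apply: val_inj; apply/eqP.
have : x == y %[mod m * n] by rewrite chinese_remainder // em en !eqxx.
by rewrite !modn_small.
Qed.

Let crt_pair_bij : bijective crt_pair.
Proof.
apply: inj_card_bij; last by rewrite !card_prod !card_ord mulnACA.
move=> [x y] [x' y'] [ex ey ex' ey'].
by rewrite (crt_inj ex ex') (crt_inj ey ey').
Qed.

Lemma Gn_crt : Gn (m * n) = crt_pair @^-1: setX (Gn m) (Gn n).
Proof.
apply/setP => -[x y]; rewrite !inE /=.
rewrite -[_ == _ %[mod m * n]]/(on_circle _ x y) on_circle_crt //.
rewrite -/(on_circle m (x %% m) (y %% m)) -/(on_circle n (x %% n) (y %% n)).
by rewrite !on_circle_mod.
Qed.

Lemma Phi_mul : Phi (m * n) = Phi m * Phi n.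
Proof. by rewrite /Phi Gn_crt on_card_preimset ?cardsX //; apply: onW_bij. Qed.

End ChineseRemainder.

(* A point of the circle mod M cannot have both coordinates divisible by a
   prime divisor p of M, since then p would divide a^2 + b^2 = 1 (mod p). *)
Lemma on_circle_coord_ndvd {M p a b : nat} : prime p -> p %| M ->
  on_circle M a b -> ~~ (p %| a) || ~~ (p %| b).
Proof.
move=> p_pr pM /(on_circle_dvd pM) /eqP ab_circ; rewrite -negb_and.
apply/negP => /andP[pa pb].
have : p %| a ^ 2 + b ^ 2 by rewrite dvdn_add // dvdn_exp.
by rewrite /dvdn ab_circ modn_small ?prime_gt1.
Qed.

Lemma pow_gt1 {p : nat} (k : nat) : 1 < p -> 1 < p ^ k.+1.
Proof. by move=> p_gt1; apply: leq_ltn_trans (ltn0Sn k) (ltn_expl _ p_gt1). Qed.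

(* For odd p, every point mod p^(k+1) has exactly p lifts mod p^(k+2)
   (Hensel lifting with m = M = p^(k+1), e = 2): Phi(p^(k+2)) = p Phi(p^(k+1)). *)
Lemma Phi_odd_pow_step p k : prime p -> odd p -> Phi (p ^ k.+2) = p * Phi (p ^ k.+1).
Proof.
move=> p_pr p_odd; have p_gt2 := odd_prime_gt2 p_odd p_pr.
rewrite !Phi_circle_count (expnSr p k.+1) (@circle_count_lift p _ _ 2 (p ^ k)) //.
- exact/pow_gt1/prime_gt1.
- by rewrite -expnSr -expnD -expnM; congr (p ^ _); lia.
move=> a b /(on_circle_coord_ndvd p_pr (dvdn_exp (ltn0Sn k) (dvdnn p))).
have pN2 : ~~ (p %| 2) by apply/negP => /dvdn_leq; lia.
by rewrite !Euclid_dvdM // (negbTE pN2).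
Qed.

Lemma Phi_odd_pow p k : prime p -> odd p -> Phi (p ^ k.+1) = p ^ k * Phi p.
Proof.
move=> p_pr p_odd; elim: k => [|k IH]; first by rewrite expn1 mul1n.
by rewrite Phi_odd_pow_step // IH mulnA -expnS.
Qed.

(* Modulo 2^(j+3) the circle is periodic of period 2^(j+2) in each variable. *)
Lemma Phi_pow2_periodic j : Phi (2 ^ j.+3) = 4 * circle_count (2 ^ j.+2) (2 ^ j.+3).
Proof.
rewrite Phi_circle_count (expnSr 2 j.+2) circle_count_periodic //.
  by rewrite mulnC.
by rewrite -expnSr -expnM dvdn_Pexp2l //; lia.
Qed.

(* Hensel lifting from 2^(i+3) to 2^(i+4) along the step 2^(i+2) (e = 1),
   combined with the periodicity above. *)
Lemma Phi_pow2_step i : Phi (2 ^ i.+4) = 2 * Phi (2 ^ i.+3).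
Proof.
rewrite !Phi_pow2_periodic (expnSr 2 i.+2) (expnSr 2 i.+3).
rewrite (@circle_count_lift 2 _ _ 1 (2 ^ i)) //.
- by rewrite -!expnSr mulnCA.
- exact: pow_gt1.
- by rewrite mul1n expnS.
- by rewrite -expnSr -expnD -expnM; congr (2 ^ _); lia.
move=> a b; rewrite !mul1n; apply: on_circle_coord_ndvd => //.
by rewrite expnS dvdn_mulr.
Qed.

(* The base cases Phi(4) = 8 and Phi(8) = 16 are direct computations. *)
Lemma Phi_pow2 k : Phi (2 ^ k.+2) = 2 ^ k.+3.
Proof.
elim: k => [|[|k] IH];
  try by rewrite Phi_circle_count /circle_count !big_ord_recr !big_ord0.
by rewrite Phi_pow2_step IH -expnS.
Qed.

Lemma Phi1 : Phi 1 = 1.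
Proof. by rewrite Phi_circle_count /circle_count !big_ord_recr !big_ord0. Qed.

Lemma Phi2 : Phi 2 = 2.
Proof. by rewrite Phi_circle_count /circle_count !big_ord_recr !big_ord0. Qed.

Local Open Scope ring_scope.

(* Over a finite field F of characteristic not 2, the circle x^2 + y^2 = 1
   has #|F| + 1 - #{t | t^2 = -1} points: stereographic projection from
   (-1, 0) identifies the rest of the circle with the parameters t such that
   1 + t^2 != 0, through t |-> ((1 - t^2) / (1 + t^2), 2 t / (1 + t^2)). *)
Section UnitCircle.

Variable F : finFieldType.
Hypothesis two_neq0 : (2 : F) != 0.

Definition unit_circle : {set F * F} := [set xy | xy.1 ^+ 2 + xy.2 ^+ 2 == 1].
Definition sqrts_neg1 : {set F} := [set t | t ^+ 2 == -1].

Let stereo (t : F) : F * F := ((1 - t ^+ 2) / (1 + t ^+ 2), 2 * t / (1 + t ^+ 2)).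
Let stereo_inv (xy : F * F) : F := xy.2 / (1 + xy.1).

Let not_sqrt_neg1 t : t \notin sqrts_neg1 -> 1 + t ^+ 2 != 0.
Proof. by rewrite inE addrC addr_eq0. Qed.

Let ratio_neq_neg1 {s : F} : 1 + s != 0 -> (1 - s) / (1 + s) != -1.
Proof.
move=> s1; apply: contra two_neq0 => /eqP /(congr1 ( *%R^~ (1 + s))).
rewrite mulfVK // mulN1r => es.
have -> : (2 : F) = (1 - s) + (1 + s) by ring.
by rewrite es addNr.
Qed.

Let stereoK : {in ~: sqrts_neg1, cancel stereo stereo_inv}.
Proof.
move=> t; rewrite inE => /not_sqrt_neg1 t2; rewrite /stereo_inv /stereo /=.
field; rewrite t2 /= (_ : 1 + t ^+ 2 + (1 - t ^+ 2) = 2) //; ring.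
Qed.

Let stereo_image : stereo @: (~: sqrts_neg1) = unit_circle :\ (-1, 0).
Proof.
apply/setP => xy; apply/imsetP/idP.
  move=> [t]; rewrite inE => /not_sqrt_neg1 t2 ->.
  rewrite !inE /= xpair_eqE (negbTE (ratio_neq_neg1 t2)) /=.
  by apply/eqP; field.
case: xy => x y; rewrite !inE /= xpair_eqE => /andP[xy_ne /eqP xy_circ].
have y2 : y ^+ 2 = 1 - x ^+ 2 by rewrite -xy_circ; ring.
have x1 : 1 + x != 0.
  apply: contra xy_ne; rewrite addrC addr_eq0 => /eqP x_neg1.
  move: y2; rewrite x_neg1 sqrrN expr1n subrr => /eqP.
  by rewrite expf_eq0 /= => ->; rewrite eqxx.
have t2 : (y / (1 + x)) ^+ 2 = (1 - x) / (1 + x) by rewrite expr_div_n y2; field.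
have sum2 : 1 + x + (1 - x) = 2 by ring.
exists (stereo_inv (x, y)); first by rewrite !inE /= t2 ratio_neq_neg1.
by rewrite /stereo /stereo_inv /= t2; congr (_, _); field; rewrite x1 sum2.
Qed.

Lemma card_unit_circle : (#|unit_circle| + #|sqrts_neg1| = #|F|.+1)%N.
Proof.
have circ_neg1 : (-1, 0) \in unit_circle.
  by rewrite inE /= sqrrN expr1n expr0n /= addr0.
rewrite (cardsD1 (-1, 0)) circ_neg1 -stereo_image card_in_imset; last first.
  exact: can_in_inj stereoK.
by rewrite add1n addSn addnC cardsC.
Qed.

(* -1 has either no square root or exactly two, t and -t (distinct as 2 != 0). *)
Lemma card_sqrts_neg1 :
  #|sqrts_neg1| = if [exists t : F, t ^+ 2 == -1] then 2%N else 0%N.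
Proof.
case: existsP => [[t0 t0_sqrt]|none]; last first.
  apply/eqP; rewrite cards_eq0 -subset0; apply/subsetP => t.
  by rewrite inE => t_sqrt; case: none; exists t.
have -> : sqrts_neg1 = [set t0; -t0].
  by apply/setP => t; rewrite !inE -(eqP t0_sqrt) eqf_sqr.
rewrite cards2; case: eqP => // t0_neg.
have : t0 * 2 = 0 by rewrite mulr_natr mulr2n {1}t0_neg addNr.
move/eqP; rewrite mulf_eq0 (negbTE two_neq0) orbF => /eqP t00.
by move: t0_sqrt; rewrite t00 expr0n /= eq_sym oppr_eq0 oner_eq0.
Qed.

End UnitCircle.

Section PrimeField.

Variable p : nat.
Hypothesis p_pr : prime p.

Lemma Fp_nat_eq a b : ((a%:R : 'F_p) == b%:R) = (a == b %[mod p])%N.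
Proof. by rewrite -val_eqE /= !val_Fp_nat. Qed.

Lemma Fp_sqr_eq_neg1 x : ((x%:R : 'F_p) ^+ 2 == -1) = (p %| x ^ 2 + 1)%N.
Proof.
rewrite -subr_eq0 opprK -natrX -[1]/(1%:R) -natrD -[0]/(0%:R).
by rewrite Fp_nat_eq // mod0n.
Qed.

Lemma Phi_prime : Phi p = #|unit_circle 'F_p|.
Proof.
have ec := Fp_cast p_pr.
pose cast2 (xy : 'F_p * 'F_p) : 'I_p * 'I_p := (cast_ord ec xy.1, cast_ord ec xy.2).
have cast2_inj : injective cast2.
  by move=> [x y] [x' y'] [/val_inj ex /val_inj ey]; rewrite ex ey.
rewrite /Phi -(card_imset _ cast2_inj); apply: eq_card => -[a b].
rewrite /Gn !inE /=; apply/idP/imsetP.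
  move=> ab_circ; exists ((a%:R : 'F_p), (b%:R : 'F_p)).
    by rewrite inE /= -!natrX -natrD -[1]/(1%:R) Fp_nat_eq.
  by congr (_, _); apply: val_inj; rewrite /= val_Fp_nat // modn_small.
move=> [[x y]]; rewrite inE /= => xy_circ [-> ->] /=.
by rewrite -Fp_nat_eq natrD !natrX !natr_Zp.
Qed.

Lemma beta_odd_prime : p != 2%N ->
  beta p = (if [exists t : 'F_p, t ^+ 2 == -1] then 1 else -1).
Proof.
move=> p_neq2; rewrite /beta (negbTE p_neq2) /legendre dvdzE /= Euclid_dvd1 //.
have sqr_int x : (x%:Z ^+ 2 - -1 = (x ^ 2 + 1)%N :> int) by lia.
congr (if _ then _ else _); apply/existsP/existsP => -[x x_sqrt].
  by exists (x%:R : 'F_p); move: x_sqrt; rewrite sqr_int dvdzE Fp_sqr_eq_neg1.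
exists (cast_ord (Fp_cast p_pr) x); rewrite /= sqr_int dvdzE /=.
by rewrite -Fp_sqr_eq_neg1 natr_Zp.
Qed.

Lemma two_Fp_neq0 : p != 2%N -> (2 : 'F_p) != 0.
Proof.
move=> p_neq2; have p_gt2 : (2 < p)%N by have := prime_gt1 p_pr; lia.
by rewrite -[0]/(0%:R) Fp_nat_eq !modn_small //; lia.
Qed.

Lemma Phi_odd_prime : p != 2%N -> (Phi p)%:Q = p%:Q - (beta p)%:~R.
Proof.
move=> p_neq2; have two_neq0 := two_Fp_neq0 p_neq2.
have := @card_unit_circle 'F_p two_neq0.
rewrite -Phi_prime card_Fp // (@card_sqrts_neg1 'F_p two_neq0) beta_odd_prime //.
case: ifP => _ /(congr1 (fun k : nat => k%:R : rat)) /=;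
  rewrite natrD -addn1 natrD => e; lra.
Qed.

End PrimeField.

Definition local_factor (p : nat) : rat := 1 - (beta p)%:~R / p%:Q.
Definition two_adic_factor (n : nat) : rat := if (4 %| n)%N then 2 else 1.
Definition Phi_formula (n : nat) : rat :=
  two_adic_factor n * n%:Q * \prod_(p <- primes n) local_factor p.

(* Products over prime divisors are multiplicative on coprime arguments,
   whose lists of prime divisors are disjoint. *)
Lemma big_primes_coprime_mul (R : comPzRingType) (F : nat -> R) m n :
  (0 < m)%N -> (0 < n)%N -> coprime m n ->
  \prod_(p <- primes (m * n)) F p = \prod_(p <- primes m) F p * \prod_(p <- primes n) F p.
Proof.
move=> m_gt0 n_gt0 co_mn; rewrite -big_cat; apply/perm_big/uniq_perm.
- exact: primes_uniq.
- by rewrite cat_uniq !primes_uniq andbT /= -coprime_has_primes.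
- by move=> p; rewrite primesM // mem_cat.
Qed.

Lemma two_adic_factor_odd {n : nat} : odd n -> two_adic_factor n = 1.
Proof.
move=> n_odd; rewrite /two_adic_factor ifN //.
by apply: contraL n_odd => /(dvdn_trans (isT : (2 %| 4)%N)); rewrite dvdn2 => ->.
Qed.

(* Of two coprime numbers at most one is even, and 4 divides their product
   iff it divides the even one. *)
Lemma two_adic_factor_coprime_mul m n : coprime m n ->
  two_adic_factor (m * n) = two_adic_factor m * two_adic_factor n.
Proof.
wlog m_odd : m n / odd m.
  move=> wlog_odd co_mn; have [m_odd|m_even] := boolP (odd m); first exact: wlog_odd.
  have n_odd : odd n by rewrite -coprime2n (coprime_dvdl _ co_mn) // dvdn2.
  by rewrite mulnC mulrC wlog_odd // coprime_sym.
move=> co_mn; rewrite (two_adic_factor_odd m_odd) mul1r /two_adic_factor.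
have co_4m : coprime 4 m by rewrite (_ : 4 = 2 ^ 2)%N // coprimeXl // coprime2n.
by rewrite Gauss_dvdr.
Qed.

Lemma Phi_formula_coprime_mul m n : (0 < m)%N -> (0 < n)%N -> coprime m n ->
  Phi_formula (m * n) = Phi_formula m * Phi_formula n.
Proof.
move=> m_gt0 n_gt0 co_mn; rewrite /Phi_formula two_adic_factor_coprime_mul //.
by rewrite big_primes_coprime_mul // PoszM intrM; ring.
Qed.

Lemma Phi_prime_pow p k : prime p -> (Phi (p ^ k.+1))%:Q = Phi_formula (p ^ k.+1).
Proof.
move=> p_pr; rewrite /Phi_formula primesX // primes_prime // big_seq1.
have [->|p_neq2] := eqVneq p 2%N.
  rewrite /local_factor /beta /= mul0r subr0 mulr1.
  case: k => [|k]; first by rewrite expn1 Phi2.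
  have dvd4 : (4 %| 2 ^ k.+2)%N by rewrite (_ : 4 = 2 ^ 2)%N // dvdn_Pexp2l.
  by rewrite Phi_pow2 /two_adic_factor dvd4 expnS PoszM intrM.
have p_odd : odd p by case: (even_prime p_pr) p_neq2 => ->.
have p_neq0 : p%:Q != 0 by rewrite pnatr_eq0 -lt0n prime_gt0.
rewrite two_adic_factor_odd ?oddX ?p_odd ?orbT // Phi_odd_pow // PoszM intrM.
by rewrite Phi_odd_prime // /local_factor expnS PoszM intrM; field.
Qed.

(* Induction along the factorisation n = m p^(k+1) with p prime, p not | m:
   a predicate true at 1 and at prime powers, and stable under products
   of coprime numbers, holds for all positive integers. *)
Lemma coprime_induction (P : nat -> Prop) :
  P 1%N -> (forall p k, prime p -> P (p ^ k.+1)%N) ->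
  (forall m n, (0 < m)%N -> (0 < n)%N -> coprime m n -> P m -> P n -> P (m * n)%N) ->
  forall n, (0 < n)%N -> P n.
Proof.
move=> P1 Ppow Pmul; elim/ltn_ind => n IH n_gt0.
have [n_le1|n_gt1] := leqP n 1%N.
  by have -> : n = 1%N by apply/eqP; rewrite eqn_leq n_le1.
pose p := pdiv n; have p_pr : prime p := pdiv_prime n_gt1.
have [m co_pm n_eq] := pfactor_coprime p_pr n_gt0.
have : (0 < logn p n)%N by rewrite logn_gt0 mem_primes p_pr n_gt0 pdiv_dvd.
case: (logn p n) n_eq => // k n_eq _.
have m_gt0 : (0 < m)%N by move: n_gt0; rewrite n_eq muln_gt0 => /andP[].
have pk_gt1 : (1 < p ^ k.+1)%N := pow_gt1 k (prime_gt1 p_pr).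
rewrite n_eq; apply: Pmul => //; first exact: ltnW.
- by rewrite coprime_sym coprimeXl.
- by apply: IH => //; rewrite n_eq -{1}(muln1 m) ltn_pmul2l.
- exact: Ppow.
Qed.

Theorem mainTheorem3 (n : nat) (hn : (0 < n)%N) :
  (Phi n)%:Q =
    (if (4 %| n)%N then 2 * n%:Q else n%:Q) *
    \prod_(p <- primes n) (1 - (beta p)%:~R / p%:Q).
Proof.
have -> : (if (4 %| n)%N then 2 * n%:Q else n%:Q) = two_adic_factor n * n%:Q.
  by rewrite /two_adic_factor; case: ifP; rewrite ?mul1r.
apply: (@coprime_induction (fun n => (Phi n)%:Q = Phi_formula n)) hn.
- by rewrite Phi1 /Phi_formula /two_adic_factor big_nil.
- exact: Phi_prime_pow.
- move=> a b a_gt0 b_gt0 co_ab Pa Pb.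
  by rewrite Phi_mul // PoszM intrM Pa Pb Phi_formula_coprime_mul.
Qed.
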